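(* Let $E$ be a Banach lattice, $u_0\in E^+$, $\delta>0$, and let $x_1^*,\dots,x_N^*\in (E^* )^+$ be mutually disjoint. Suppose $\langle u_0,x_n^*\rangle\ge\delta$ for all $1\le n\le N$ and that there exists $y^*\in(E^* )^+$ with $$\{x_n^*\}_{n=1}^N\subseteq [-y^*,y^*]+\tfrac12\delta B_{\rho_{u_0}} .$$ Then $N\le 2\langle u_0,y^*\rangle/\delta$.
   Context: For $u_0\in E$, $\rho_{u_0}$ is the Riesz seminorm on $E^*$ given by $\rho_{u_0}(x^* )=\langle |u_0|,|x^*|\rangle$, and $B_{\rho_{u_0}}=\{x^*\in E^*:\rho_{u_0}(x^* )\le 1\}$. $[-y^*,y^*]$ is the order interval in $E^*$. *)

From Stdlib Require Export Reals.
Open Scope R_scope.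
Set Implicit Arguments.

Record BanachLattice := {
  car :> Type;
  add : car -> car -> car;
  opp : car -> car;
  zero : car;
  scal : R -> car -> car;
  le : car -> car -> Prop;
  join : car -> car -> car;
  norm : car -> R;
  addA : forall x y z, add x (add y z) = add (add x y) z;
  addC : forall x y, add x y = add y x;
  add0 : forall x, add x zero = x;
  addN : forall x, add x (opp x) = zero;
  scal_addr : forall a x y, scal a (add x y) = add (scal a x) (scal a y);
  scal_addl : forall a b x, scal (a + b) x = add (scal a x) (scal b x);
  scalA : forall a b x, scal a (scal b x) = scal (a * b) x;
  scal1 : forall x, scal 1 x = x;
  le_refl : forall x, le x x;
  le_trans : forall x y z, le x y -> le y z -> le x z;
  le_antisym : forall x y, le x y -> le y x -> x = y;
  le_add : forall x y z, le x y -> le (add x z) (add y z);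
  le_scal : forall a x y, 0 <= a -> le x y -> le (scal a x) (scal a y);
  join_ubl : forall x y, le x (join x y);
  join_ubr : forall x y, le y (join x y);
  join_lub : forall x y z, le x z -> le y z -> le (join x y) z;
  norm0 : forall x, norm x = 0 <-> x = zero;
  normD : forall x y, norm (add x y) <= norm x + norm y;
  normZ : forall a x, norm (scal a x) = Rabs a * norm x;
  norm_lattice : forall x y, le (join x (opp x)) (join y (opp y)) -> norm x <= norm y;
  complete : forall u : nat -> car,
    (forall eps, eps > 0 -> exists M, forall m n, (m >= M)%nat -> (n >= M)%nat ->
        norm (add (u m) (opp (u n))) < eps) ->
    exists l, forall eps, eps > 0 -> exists M, forall n, (n >= M)%nat ->
        norm (add (u n) (opp l)) < eps
}.

Arguments add {b0}. Arguments opp {b0}. Arguments scal {b0}. Arguments le {b0}.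
Arguments join {b0}. Arguments norm {b0}.

Section Dual.
Variable E : BanachLattice.

Definition absE (x : E) : E := join x (opp x).
Definition posE (x : E) : Prop := le (zero E) x.

Definition in_dual (f : E -> R) : Prop :=
  (forall x y, f (add x y) = f x + f y) /\
  (forall a x, f (scal a x) = a * f x) /\
  (exists C, forall x, Rabs (f x) <= C * norm x).

Definition dle (f g : E -> R) : Prop := forall x, posE x -> f x <= g x.
Definition dpos (f : E -> R) : Prop := in_dual f /\ dle (fun _ => 0) f.

Definition is_dsup (f g h : E -> R) : Prop :=
  in_dual h /\ dle f h /\ dle g h /\
  forall k, in_dual k -> dle f k -> dle g k -> dle h k.
Definition is_dinf (f g h : E -> R) : Prop :=
  in_dual h /\ dle h f /\ dle h g /\
  forall k, in_dual k -> dle k f -> dle k g -> dle k h.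

Definition is_dabs (f a : E -> R) : Prop := is_dsup f (fun x => - f x) a.

Definition ddisjoint (f g : E -> R) : Prop :=
  exists a b, is_dabs f a /\ is_dabs g b /\ is_dinf a b (fun _ => 0).

(* rho_{u0}(f) = <|u0|, |f|> = r *)
Definition rho_eq (u0 : E) (f : E -> R) (r : R) : Prop :=
  exists a, is_dabs f a /\ r = a (absE u0).

Definition in_Brho (u0 : E) (f : E -> R) : Prop :=
  in_dual f /\ exists r, rho_eq u0 f r /\ r <= 1.

Definition in_interval_plus_ball (u0 : E) (y : E -> R) (c : R) (f : E -> R) : Prop :=
  exists z w, in_dual z /\ dle (fun x => - y x) z /\ dle z y /\
    in_Brho u0 w /\ forall x, f x = z x + c * w x.

End Dual.

Arguments absE {E}. Arguments posE {E}. Arguments in_dual {E}. Arguments dle {E}.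
Arguments dpos {E}. Arguments is_dsup {E}. Arguments is_dinf {E}. Arguments is_dabs {E}.
Arguments ddisjoint {E}. Arguments rho_eq {E}. Arguments in_Brho {E}.
Arguments in_interval_plus_ball {E}.

From Stdlib Require Import Reals Lra Lia List ClassicalEpsilon Classical.
Import ListNotations.
Open Scope R_scope.
Set Implicit Arguments.
Unset Strict Implicit.

(* Proof idea: for functionals f, g >= 0 on E, the Riesz-Kantorovich
   expression inf {f v + g (u - v) : 0 <= v <= u} (u >= 0) is additive and
   extends to an element of E^* below f and g; so if |f| /\ |g| = 0 it
   vanishes.  Iterating, u0 splits up to any error into pieces p_n with
   sum p_n <= u0 and x_n (u0 - p_n) small.  Membership of x_n in
   [-y, y] + delta/2 B gives x_n v <= y v + delta/2 for 0 <= v <= u0, hence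
   y p_n >= x_n p_n - delta/2 ~ delta/2 and y u0 >= sum y p_n ~ N delta/2. *)

Section VectorLattice.
Context {E : BanachLattice}.
Implicit Types x y u v w : E.

Lemma add0l x : add (zero E) x = x.
Proof. rewrite addC; apply add0. Qed.

Lemma addNl x : add (opp x) x = zero E.
Proof. rewrite addC; apply addN. Qed.

Lemma add_eq0_opp x y : add x y = zero E -> y = opp x.
Proof.
  intro H. rewrite <- (add0 E y), <- (addN E x), addA, (addC E y x), H. apply add0l.
Qed.

Lemma oppK x : opp (opp x) = x.
Proof. symmetry; apply add_eq0_opp, addNl. Qed.

Lemma opp0 : opp (zero E) = zero E.
Proof. symmetry; apply add_eq0_opp, add0. Qed.

Lemma addKl x y : add (opp x) (add x y) = y.
Proof. rewrite addA, addNl; apply add0l. Qed.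

Lemma addNKl x y : add x (add (opp x) y) = y.
Proof. rewrite addA, addN; apply add0l. Qed.

Lemma subK x y : add (add x (opp y)) y = x.
Proof. rewrite <- addA, addNl; apply add0. Qed.

Lemma sub_eq_add x y u v : add x (opp y) = add u (opp v) -> add x v = add u y.
Proof.
  intro H. pose proof (f_equal (fun z => add z (add y v)) H) as H'. cbv beta in H'.
  rewrite <- !addA, !addKl, (addC E y v), addKl in H'. exact H'.
Qed.

Lemma add4 x y u v : add (add x y) (add u v) = add (add x u) (add y v).
Proof. rewrite <- (addA E x y), (addA E y u v), (addC E y u), <- (addA E u y v), addA. reflexivity. Qed.

Lemma scal0 x : scal 0 x = zero E.
Proof.
  pose proof (scal_addl E 0 0 x) as H. rewrite Rplus_0_r in H.
  pose proof (f_equal (fun z => add z (opp (scal 0 x))) H) as H'. cbv beta in H'.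
  rewrite <- addA, !addN, add0 in H'. symmetry; exact H'.
Qed.

Lemma scal_zero a : scal a (zero E) = zero E.
Proof. rewrite <- (scal0 (zero E)), scalA, Rmult_0_r. reflexivity. Qed.

Lemma opp_scal x : opp x = scal (-1) x.
Proof.
  symmetry; apply add_eq0_opp. rewrite <- (scal1 E x) at 1. rewrite <- scal_addl.
  replace (1 + -1) with 0 by ring. apply scal0.
Qed.

Lemma opp_add x y : opp (add x y) = add (opp x) (opp y).
Proof. rewrite !opp_scal; apply scal_addr. Qed.

Lemma scal_opp a x : scal a (opp x) = opp (scal a x).
Proof. rewrite !opp_scal, !scalA, Rmult_comm. reflexivity. Qed.

Lemma le_addl x y z : le x y -> le (add z x) (add z y).
Proof. intro H. rewrite (addC E z x), (addC E z y). apply le_add, H. Qed.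

Lemma le_add2 x y u v : le x y -> le u v -> le (add x u) (add y v).
Proof. intros. apply le_trans with (add y u); [apply le_add | apply le_addl]; assumption. Qed.

Lemma subr_ge0 u v : le v u -> posE (add u (opp v)).
Proof. intro H. unfold posE. rewrite <- (addN E v). apply le_add, H. Qed.

Lemma le_opp x y : le x y -> le (opp y) (opp x).
Proof.
  intro H. pose proof (le_add E _ _ (add (opp x) (opp y)) H) as H'.
  rewrite addNKl, (addC E (opp x) (opp y)), addNKl in H'. exact H'.
Qed.

Lemma oppr_le0 x : posE x -> le (opp x) (zero E).
Proof. intro H. rewrite <- opp0. apply le_opp, H. Qed.

Lemma le_sub_pos u v : posE v -> le (add u (opp v)) u.
Proof. intro H. rewrite <- (add0 E u) at 2. apply le_addl, oppr_le0, H. Qed.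

Lemma pos_add x y : posE x -> posE y -> posE (add x y).
Proof. unfold posE. intros. rewrite <- (add0 E (zero E)). apply le_add2; assumption. Qed.

Lemma pos_scal a x : 0 <= a -> posE x -> posE (scal a x).
Proof. unfold posE. intros. rewrite <- (scal_zero a). apply le_scal; assumption. Qed.

Lemma join_comm x y : join x y = join y x.
Proof. apply le_antisym; apply join_lub; auto using join_ubl, join_ubr. Qed.

Lemma add_join x y z : add z (join x y) = join (add z x) (add z y).
Proof.
  apply le_antisym.
  - rewrite <- (addNKl z (join (add z x) (add z y))). apply le_addl, join_lub.
    + rewrite <- (addKl z x) at 1. apply le_addl, join_ubl.
    + rewrite <- (addKl z y) at 1. apply le_addl, join_ubr.
  - apply join_lub; apply le_addl; auto using join_ubl, join_ubr.
Qed.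

Lemma absE_ge0 x : posE (absE x).
Proof.
  assert (H2 : posE (scal 2 (absE x))).
  { unfold posE. replace 2 with (1 + 1) by ring.
    rewrite scal_addl, scal1, <- (addN E x).
    apply le_add2; [apply join_ubl | apply join_ubr]. }
  apply (pos_scal (a := / 2)) in H2; [|lra].
  rewrite scalA, Rinv_l, scal1 in H2; [exact H2 | lra].
Qed.

Lemma absE_pos u : posE u -> absE u = u.
Proof.
  intro Hu. apply le_antisym; [apply join_lub | apply join_ubl].
  - apply le_refl.
  - apply le_trans with (zero E); [apply oppr_le0 |]; exact Hu.
Qed.

Lemma pos_part_ge0 x : posE (join x (zero E)).
Proof. apply join_ubr. Qed.

Lemma pos_part_sub x : x = add (join x (zero E)) (opp (join (opp x) (zero E))).
Proof.
  assert (H : add x (join (opp x) (zero E)) = join x (zero E)).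
  { rewrite add_join, addN, add0, join_comm. reflexivity. }
  rewrite <- H, <- addA, addN, add0. reflexivity.
Qed.

Lemma riesz_decomposition v u1 u2 : posE v -> posE u1 -> posE u2 -> le v (add u1 u2) ->
  exists v1 v2, posE v1 /\ le v1 u1 /\ posE v2 /\ le v2 u2 /\ v = add v1 v2.
Proof.
  intros Hv Hu1 Hu2 H.
  set (J := join (opp v) (opp u1)).
  assert (HJ0 : le J (zero E)) by (apply join_lub; apply oppr_le0; assumption).
  exists (opp J), (add v J). repeat split.
  - unfold posE. rewrite <- opp0. apply le_opp, HJ0.
  - rewrite <- (oppK u1). apply le_opp, join_ubr.
  - unfold posE. rewrite <- (addN E v). apply le_addl, join_ubl.
  - unfold J. rewrite add_join, addN. apply join_lub; [exact Hu2|].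
    pose proof (le_add E _ _ (opp u1) H) as H'.
    rewrite (addC E u1 u2), <- addA, addN, add0 in H'. exact H'.
  - rewrite addA, (addC E (opp J) v), <- addA, addNl, add0. reflexivity.
Qed.

Lemma norm_opp x : norm (opp x) = norm x.
Proof. rewrite opp_scal, normZ, Rabs_left by lra. ring. Qed.

Lemma norm_ge0 x : 0 <= norm x.
Proof.
  pose proof (normD E x (opp x)) as H. rewrite addN, norm_opp, (proj2 (norm0 E _) eq_refl) in H. lra.
Qed.

Lemma norm_le_absE p x : posE p -> le p (absE x) -> norm p <= norm x.
Proof.
  intros Hp Hpx. apply norm_lattice. apply join_lub; [exact Hpx|].
  apply le_trans with (zero E); [apply oppr_le0, Hp | apply absE_ge0].
Qed.

End VectorLattice.

Section Functional.
Context {E : BanachLattice}.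
Variable f : E -> R.
Hypothesis f_dual : in_dual f.

Lemma lin_add x y : f (add x y) = f x + f y.
Proof. apply f_dual. Qed.

Lemma lin_scal a x : f (scal a x) = a * f x.
Proof. apply f_dual. Qed.

Lemma lin_zero : f (zero E) = 0.
Proof. rewrite <- (scal0 (zero E)), lin_scal. ring. Qed.

Lemma lin_sub x y : f (add x (opp y)) = f x - f y.
Proof. rewrite lin_add, opp_scal, lin_scal. ring. Qed.

Hypothesis f_pos : dle (fun _ => 0) f.

Lemma lin_ge0 x : posE x -> 0 <= f x.
Proof. apply f_pos. Qed.

Lemma lin_le x y : le x y -> f x <= f y.
Proof. intro H. pose proof (lin_ge0 (subr_ge0 H)) as Hd. rewrite lin_sub in Hd. lra. Qed.

End Functional.

Section RieszKantorovich.
Context {E : BanachLattice}.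
Variables f g : E -> R.
Hypotheses (f_dual : in_dual f) (g_dual : in_dual g).
Hypotheses (f_pos : dle (fun _ => 0) f) (g_pos : dle (fun _ => 0) g).

Definition rk_value (u v : E) : R := f v + g (add u (opp v)).

(* The values of [rk_value u] on [[0, u]], negated so that their infimum
   becomes a least upper bound. *)
Definition rk_neg_values (u : E) (r : R) : Prop :=
  exists v, posE v /\ le v u /\ r = - rk_value u v.

(* For [u >= 0], [rk_inf u = inf {f v + g (u - v) : 0 <= v <= u}], which is
   [(f /\ g) u] by the Riesz-Kantorovich formula. *)
Definition rk_inf (u : E) : R :=
  - epsilon (inhabits 0) (is_lub (rk_neg_values u)).

Lemma rk_value_ge0 u v : posE v -> le v u -> 0 <= rk_value u v.
Proof.
  intros Hv Hvu. unfold rk_value.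
  pose proof (lin_ge0 f_pos Hv). pose proof (lin_ge0 g_pos (subr_ge0 Hvu)). lra.
Qed.

Lemma rk_value_lin u v : rk_value u v = f v + g u - g v.
Proof. unfold rk_value. rewrite lin_sub by exact g_dual. ring. Qed.

Lemma rk_inf_lub u : posE u -> is_lub (rk_neg_values u) (- rk_inf u).
Proof.
  intro Hu. unfold rk_inf. rewrite Ropp_involutive. apply epsilon_spec.
  destruct (completeness (rk_neg_values u)) as [m Hm].
  - exists 0. intros r [v [Hv [Hvu ->]]]. pose proof (rk_value_ge0 Hv Hvu). lra.
  - exists (- rk_value u (zero E)), (zero E). repeat split; [apply le_refl | exact Hu].
  - exists m; exact Hm.
Qed.

Lemma rk_inf_le u v : posE u -> posE v -> le v u -> rk_inf u <= rk_value u v.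
Proof.
  intros Hu Hv Hvu. destruct (rk_inf_lub Hu) as [Hub _].
  assert (H : - rk_value u v <= - rk_inf u) by (apply Hub; exists v; auto). lra.
Qed.

Lemma rk_inf_ge u r : posE u ->
  (forall v, posE v -> le v u -> r <= rk_value u v) -> r <= rk_inf u.
Proof.
  intros Hu Hr. destruct (rk_inf_lub Hu) as [_ Hlub].
  assert (H : - rk_inf u <= - r); [| lra].
  apply Hlub. intros s [v [Hv [Hvu ->]]]. pose proof (Hr v Hv Hvu). lra.
Qed.

Lemma rk_inf_approx u eps : posE u -> eps > 0 ->
  exists v, posE v /\ le v u /\ rk_value u v < rk_inf u + eps.
Proof.
  intros Hu He. apply NNPP. intro Hn.
  assert (H : rk_inf u + eps <= rk_inf u); [| lra].
  apply rk_inf_ge; [exact Hu|]. intros v Hv Hvu.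
  apply Rnot_lt_le. intro Hlt. apply Hn. exists v; auto.
Qed.

Lemma rk_inf_ge0 u : posE u -> 0 <= rk_inf u.
Proof. intro Hu. apply rk_inf_ge; [exact Hu|]. intros. apply rk_value_ge0; assumption. Qed.

Lemma rk_inf_le_f u : posE u -> rk_inf u <= f u.
Proof.
  intro Hu. pose proof (rk_inf_le Hu Hu (le_refl E u)). rewrite rk_value_lin in H. lra.
Qed.

Lemma rk_inf_le_g u : posE u -> rk_inf u <= g u.
Proof.
  intro Hu. pose proof (rk_inf_le (v := zero E) Hu (le_refl E _) Hu) as H.
  rewrite rk_value_lin, lin_zero, (lin_zero g_dual) in H by exact f_dual. lra.
Qed.

(* Additivity of [rk_inf] on the positive cone: this is where the Riesz
   decomposition property enters. *)
Lemma rk_inf_add u1 u2 : posE u1 -> posE u2 ->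
  rk_inf (add u1 u2) = rk_inf u1 + rk_inf u2.
Proof.
  intros Hu1 Hu2. assert (Hu : posE (add u1 u2)) by (apply pos_add; assumption).
  apply Rle_antisym.
  - apply le_epsilon. intros eps He.
    destruct (rk_inf_approx (eps := eps / 2) Hu1 ltac:(lra)) as [v1 [Hv1 [Hv1u H1]]].
    destruct (rk_inf_approx (eps := eps / 2) Hu2 ltac:(lra)) as [v2 [Hv2 [Hv2u H2]]].
    pose proof (rk_inf_le Hu (pos_add Hv1 Hv2) (le_add2 Hv1u Hv2u)) as H.
    rewrite !rk_value_lin, !(lin_add g_dual), (lin_add f_dual) in *. lra.
  - apply rk_inf_ge; [exact Hu|]. intros v Hv Hvu.
    destruct (riesz_decomposition Hv Hu1 Hu2 Hvu) as [v1 [v2 [Hv1 [Hv1u [Hv2 [Hv2u ->]]]]]].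
    pose proof (rk_inf_le Hu1 Hv1 Hv1u). pose proof (rk_inf_le Hu2 Hv2 Hv2u).
    rewrite !rk_value_lin, !(lin_add g_dual), (lin_add f_dual) in *. lra.
Qed.

Lemma rk_inf_zero : rk_inf (zero E) = 0.
Proof.
  pose proof (rk_inf_add (le_refl E _) (le_refl E _)) as H. rewrite add0 in H. lra.
Qed.

Lemma rk_inf_scal_ge a u : 0 < a -> posE u -> a * rk_inf u <= rk_inf (scal a u).
Proof.
  intros Ha Hu. assert (Hia : 0 < / a) by (apply Rinv_0_lt_compat, Ha).
  apply rk_inf_ge; [apply pos_scal; [lra | exact Hu]|]. intros v Hv Hvu.
  assert (Hw : le (scal (/ a) v) u).
  { rewrite <- (scal1 E u), <- (Rinv_l a), <- scalA by lra. apply le_scal; [lra | exact Hvu]. }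
  pose proof (rk_inf_le Hu (pos_scal (Rlt_le _ _ Hia) Hv) Hw) as H.
  assert (Hv_eq : v = scal a (scal (/ a) v)) by (rewrite scalA, Rinv_r, scal1 by lra; reflexivity).
  set (w := scal (/ a) v) in *. rewrite Hv_eq.
  rewrite !rk_value_lin, (lin_scal f_dual), !(lin_scal g_dual) in *.
  replace (a * f w + a * g u - a * g w) with (a * (f w + g u - g w)) by ring.
  apply Rmult_le_compat_l; lra.
Qed.

Lemma rk_inf_scal a u : 0 <= a -> posE u -> rk_inf (scal a u) = a * rk_inf u.
Proof.
  intros Ha Hu. destruct (Req_dec a 0) as [->|Ha0].
  - rewrite scal0, rk_inf_zero. ring.
  - apply Rle_antisym; [| apply rk_inf_scal_ge; [lra | exact Hu]].
    pose proof (rk_inf_scal_ge (a := / a) (Rinv_0_lt_compat a ltac:(lra)) (pos_scal Ha Hu)) as H.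
    rewrite scalA, Rinv_l, scal1 in H by exact Ha0.
    apply (Rmult_le_compat_l a) in H; [| exact Ha].
    rewrite <- Rmult_assoc, Rinv_r, Rmult_1_l in H by exact Ha0. exact H.
Qed.

(* [f /\ g] as an element of [E^*], via [x = x^+ - x^-]. *)
Definition rk_meet (x : E) : R :=
  rk_inf (join x (zero E)) - rk_inf (join (opp x) (zero E)).

Lemma rk_meet_sub x p q : posE p -> posE q -> x = add p (opp q) ->
  rk_meet x = rk_inf p - rk_inf q.
Proof.
  intros Hp Hq Hx. unfold rk_meet.
  assert (Hd : add (join x (zero E)) q = add p (join (opp x) (zero E))).
  { apply sub_eq_add. rewrite <- Hx. symmetry. apply pos_part_sub. }
  pose proof (rk_inf_add (pos_part_ge0 x) Hq). pose proof (rk_inf_add Hp (pos_part_ge0 (opp x))).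
  rewrite Hd in *. lra.
Qed.

Lemma rk_meet_pos u : posE u -> rk_meet u = rk_inf u.
Proof.
  intro Hu. rewrite (rk_meet_sub (p := u) (q := zero E) Hu (le_refl E _)), rk_inf_zero.
  - ring.
  - rewrite opp0, add0. reflexivity.
Qed.

Lemma rk_meet_dual : in_dual rk_meet.
Proof.
  split; [|split].
  - intros x y.
    rewrite (rk_meet_sub (pos_part_ge0 x) (pos_part_ge0 (opp x)) (pos_part_sub x)).
    rewrite (rk_meet_sub (pos_part_ge0 y) (pos_part_ge0 (opp y)) (pos_part_sub y)).
    rewrite (rk_meet_sub (pos_add (pos_part_ge0 x) (pos_part_ge0 y))
                         (pos_add (pos_part_ge0 (opp x)) (pos_part_ge0 (opp y)))).
    + rewrite !rk_inf_add by apply pos_part_ge0. ring.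
    + rewrite (pos_part_sub x) at 1. rewrite (pos_part_sub y) at 1. rewrite opp_add. apply add4.
  - intros a x. destruct (Rle_dec 0 a) as [Ha|Ha].
    + rewrite (rk_meet_sub (pos_scal Ha (pos_part_ge0 x)) (pos_scal Ha (pos_part_ge0 (opp x)))).
      * rewrite !rk_inf_scal by (assumption || apply pos_part_ge0). unfold rk_meet. ring.
      * rewrite (pos_part_sub x) at 1. rewrite scal_addr, scal_opp. reflexivity.
    + assert (Hna : 0 <= - a) by lra.
      rewrite (rk_meet_sub (pos_scal Hna (pos_part_ge0 (opp x))) (pos_scal Hna (pos_part_ge0 x))).
      * rewrite !rk_inf_scal by (assumption || apply pos_part_ge0). unfold rk_meet. ring.
      * rewrite (pos_part_sub x) at 1. rewrite scal_addr, scal_opp, addC, !opp_scal, !scalA.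
        replace (-1 * - a) with a by ring. replace (-1 * a) with (- a) by ring. reflexivity.
  - destruct f_dual as [_ [_ [C HC]]]. exists (2 * Rabs C). intro x. unfold rk_meet.
    assert (Hbound : forall p, posE p -> le p (absE x) -> 0 <= rk_inf p <= Rabs C * norm x).
    { intros p Hp Hpx. split; [apply rk_inf_ge0, Hp|].
      apply Rle_trans with (f p); [apply rk_inf_le_f, Hp|].
      apply Rle_trans with (Rabs (f p)); [apply Rle_abs|].
      apply Rle_trans with (C * norm p); [apply HC|].
      apply Rle_trans with (Rabs C * norm p); [apply Rmult_le_compat_r; [apply norm_ge0 | apply Rle_abs]|].
      apply Rmult_le_compat_l; [apply Rabs_pos | apply norm_le_absE; assumption]. }
    pose proof (Hbound _ (pos_part_ge0 x) (join_lub E _ _ _ (join_ubl E x (opp x)) (absE_ge0 x))).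
    pose proof (Hbound _ (pos_part_ge0 (opp x)) (join_lub E _ _ _ (join_ubr E x (opp x)) (absE_ge0 x))).
    apply Rabs_le. lra.
Qed.

Lemma rk_meet_le_f : dle rk_meet f.
Proof. intros u Hu. rewrite rk_meet_pos by exact Hu. apply rk_inf_le_f, Hu. Qed.

Lemma rk_meet_le_g : dle rk_meet g.
Proof. intros u Hu. rewrite rk_meet_pos by exact Hu. apply rk_inf_le_g, Hu. Qed.

End RieszKantorovich.

Section DisjointFunctionals.
Context {E : BanachLattice}.

Lemma ddisjoint_split (f g : E -> R) : ddisjoint f g ->
  forall u, posE u -> forall eps, eps > 0 ->
  exists v, posE v /\ le v u /\ f v + g (add u (opp v)) < eps.
Proof.
  intros [a [b [[Ha [Hfa _]] [[Hb [Hgb _]] [_ [Ha0 [Hb0 Hglb]]]]]]] u Hu eps He.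
  assert (Hmeet : rk_inf a b u <= 0).
  { rewrite <- (rk_meet_pos Ha Hb Ha0 Hb0 Hu).
    apply (Hglb (rk_meet a b)); auto using rk_meet_dual, rk_meet_le_f, rk_meet_le_g. }
  destruct (rk_inf_approx Ha0 Hb0 Hu He) as [v [Hv [Hvu Hval]]].
  exists v. repeat split; try assumption. unfold rk_value in Hval.
  pose proof (Hfa v Hv). pose proof (Hgb _ (subr_ge0 Hvu)). lra.
Qed.

Lemma disjoint_peel (f : E -> R) (gs : list (E -> R)) : dpos f ->
  (forall g, In g gs -> dpos g /\ ddisjoint g f) ->
  forall u, posE u -> forall eta, eta > 0 ->
  exists v, posE v /\ le v u /\ f (add u (opp v)) <= INR (length gs) * eta /\
    forall g, In g gs -> g v <= eta.
Proof.
  intros [Hf Hf0] Hgs u Hu eta He. induction gs as [|g gs IH].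
  - exists u. repeat split; [exact Hu | apply le_refl | | intros _ []].
    rewrite (lin_sub Hf), Rminus_diag. simpl. lra.
  - destruct IH as [w [Hw [Hwu [Hfw Hgsw]]]]; [intros; apply Hgs; right; assumption |].
    destruct (Hgs g (or_introl eq_refl)) as [[_ Hg0] Hdisj].
    destruct (ddisjoint_split Hdisj Hw He) as [v [Hv [Hvw Hsplit]]].
    exists v. repeat split; [exact Hv | apply le_trans with w; assumption | |].
    + pose proof (lin_ge0 Hg0 Hv).
      replace (add u (opp v)) with (add (add u (opp w)) (add w (opp v)))
        by (rewrite <- addA, addKl; reflexivity).
      rewrite (lin_add Hf). cbn [length]. rewrite S_INR. lra.
    + intros g' [<- | Hg'].
      * pose proof (lin_ge0 Hf0 (subr_ge0 Hvw)). lra.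
      * destruct (Hgs g' (or_intror Hg')) as [[Hg'd Hg'0] _].
        pose proof (lin_le Hg'd Hg'0 Hvw). pose proof (Hgsw g' Hg'). lra.
Qed.

Fixpoint sumE (p : nat -> E) (L : list nat) : E :=
  match L with
  | [] => zero E
  | n :: L => add (p n) (sumE p L)
  end.

Lemma sumE_ext (p q : nat -> E) L : (forall n, In n L -> p n = q n) -> sumE p L = sumE q L.
Proof.
  induction L as [|n L IH]; intro H; [reflexivity|]. cbn [sumE].
  rewrite (H n (or_introl eq_refl)), IH; [reflexivity|]. intros m Hm. apply H; right; exact Hm.
Qed.

Lemma lin_sumE_ge (f : E -> R) (p : nat -> E) L b : in_dual f ->
  (forall n, In n L -> b <= f (p n)) -> INR (length L) * b <= f (sumE p L).
Proof.
  intros Hf. induction L as [|n L IH]; intro H.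
  - cbn. rewrite (lin_zero Hf). lra.
  - cbn [length sumE]. rewrite S_INR, (lin_add Hf).
    pose proof (H n (or_introl eq_refl)). assert (INR (length L) * b <= f (sumE p L)) by
      (apply IH; intros m Hm; apply H; right; exact Hm). lra.
Qed.

Lemma disjoint_partition (x : nat -> E -> R) (L : list nat) : NoDup L ->
  (forall n, In n L -> dpos (x n)) ->
  (forall n m, In n L -> In m L -> n <> m -> ddisjoint (x n) (x m)) ->
  forall u, posE u -> forall eps, eps > 0 ->
  exists p : nat -> E, le (sumE p L) u /\
    forall n, In n L -> posE (p n) /\ le (p n) u /\ x n (add u (opp (p n))) <= eps.
Proof.
  intros Hnodup Hpos Hdisj. induction Hnodup as [|n0 L Hn0 Hnodup IH]; intros u Hu eps He.
  { exists (fun _ => zero E). split; [exact Hu | intros _ []]. }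
  set (k := INR (length L)). set (eta := eps / (2 * (k + 1))).
  assert (Hk : 0 <= k) by apply pos_INR.
  assert (Heta : eta > 0) by (apply Rdiv_lt_0_compat; lra).
  assert (Hketa : k * eta + eta = eps / 2) by (unfold eta; field; lra).
  assert (Heta_half : eta <= eps / 2) by (pose proof (Rmult_le_pos k eta Hk (Rlt_le _ _ Heta)); lra).
  destruct (disjoint_peel (gs := map x L) (Hpos n0 (or_introl eq_refl))) with (u := u) (eta := eta)
    as [v [Hv [Hvu [Hn0v Hotherv]]]]; try assumption.
  { intros g Hg. apply in_map_iff in Hg as [m [<- Hm]]. split.
    - apply Hpos; right; exact Hm.
    - apply Hdisj; [right | left |]; [exact Hm | reflexivity | intros ->; contradiction]. }
  rewrite length_map in Hn0v. fold k in Hn0v.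
  destruct (IH (fun n Hn => Hpos n (or_intror Hn))
               (fun n m Hn Hm => Hdisj n m (or_intror Hn) (or_intror Hm))
               (add u (opp v)) (subr_ge0 Hvu) (eps / 2) ltac:(lra)) as [p [Hsum Hp]].
  assert (Hrest : forall m, In m L -> m <> n0) by (intros m Hm ->; contradiction).
  exists (fun n => if Nat.eq_dec n n0 then v else p n). split.
  - cbn [sumE]. destruct (Nat.eq_dec n0 n0) as [_|]; [|contradiction].
    rewrite (sumE_ext (q := p) (L := L)).
    2: { intros m Hm. destruct (Nat.eq_dec m n0); [contradiction (Hrest m Hm) | reflexivity]. }
    apply le_trans with (add v (add u (opp v))); [apply le_addl, Hsum|].
    rewrite addC, subK. apply le_refl.
  - intros n [<- | Hn].
    + destruct (Nat.eq_dec n0 n0) as [_|]; [|contradiction]. repeat split; try assumption. lra.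
    + destruct (Nat.eq_dec n n0) as [->|_]; [contradiction|].
      destruct (Hp n Hn) as [Hpn [Hpnu Hxn]].
      destruct (Hpos n (or_intror Hn)) as [Hxd _].
      pose proof (Hotherv (x n) (in_map x L n Hn)).
      repeat split; [exact Hpn | |].
      { apply le_trans with (add u (opp v)); [exact Hpnu | apply le_sub_pos, Hv]. }
      rewrite !(lin_sub Hxd) in Hxn. rewrite (lin_sub Hxd). lra.
Qed.

End DisjointFunctionals.

Lemma interval_plus_ball_le {E : BanachLattice} (u0 : E) (y f : E -> R) (c : R) :
  posE u0 -> 0 <= c -> in_interval_plus_ball u0 y c f ->
  forall v, posE v -> le v u0 -> f v <= y v + c.
Proof.
  intros Hu0 Hc [z [w [_ [_ [Hzy [[_ [r [[a [[Ha [Hwa [Hwa' _]]] Hr]] Hr1]]] Hf]]]]]] v Hv Hvu.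
  rewrite absE_pos in Hr by exact Hu0.
  assert (Ha0 : dle (fun _ => 0) a).
  { intros p Hp. pose proof (Hwa p Hp). pose proof (Hwa' p Hp). cbv beta in *. lra. }
  pose proof (lin_le Ha Ha0 Hvu). pose proof (Hwa v Hv). pose proof (Hzy v Hv).
  rewrite Hf. pose proof (Rmult_le_compat_l c (w v) 1 Hc ltac:(lra)). lra.
Qed.

Lemma le_of_forall_sub_mul (a b k : R) : 0 <= k ->
  (forall eps, eps > 0 -> a - k * eps <= b) -> a <= b.
Proof.
  intros Hk H. apply le_epsilon. intros eps He.
  assert (Hkeps : k * (eps / (k + 1)) <= eps).
  { apply (Rmult_le_reg_r (k + 1)); [lra|].
    replace (k * (eps / (k + 1)) * (k + 1)) with (k * eps) by (field; lra). nra. }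
  pose proof (H (eps / (k + 1)) ltac:(apply Rdiv_lt_0_compat; lra)). lra.
Qed.

Theorem lemma3p4 (E : BanachLattice) (u0 : E) (delta : R) (N : nat)
  (x : nat -> (E -> R)) (y : E -> R) :
  posE u0 -> delta > 0 ->
  (forall n, (n < N)%nat -> dpos (x n)) ->
  (forall n m, (n < N)%nat -> (m < N)%nat -> n <> m -> ddisjoint (x n) (x m)) ->
  (forall n, (n < N)%nat -> x n u0 >= delta) ->
  dpos y ->
  (forall n, (n < N)%nat -> in_interval_plus_ball u0 y (/ 2 * delta) (x n)) ->
  INR N <= 2 * y u0 / delta.
Proof.
  intros Hu0 Hdelta Hpos Hdisj Hge [Hyd Hy0] Hball.
  set (c := / 2 * delta).
  assert (Hc : 0 <= c) by (unfold c; lra).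
  assert (Hin : forall n, In n (seq 0 N) <-> (n < N)%nat) by (intro n; rewrite in_seq; lia).
  assert (Hmain : INR N * c <= y u0).
  { apply (le_of_forall_sub_mul (k := INR N)); [apply pos_INR|]. intros eps He.
    destruct (disjoint_partition (x := x) (seq_NoDup N 0)) with (u := u0) (eps := eps)
      as [p [Hsum Hp]]; try assumption.
    { intros n Hn. apply Hpos, Hin, Hn. }
    { intros n m Hn Hm. apply Hdisj; apply Hin; assumption. }
    apply Rle_trans with (y (sumE p (seq 0 N))); [| apply (lin_le Hyd Hy0 Hsum)].
    replace (INR N * c - INR N * eps) with (INR (length (seq 0 N)) * (c - eps))
      by (rewrite length_seq; ring).
    apply (lin_sumE_ge Hyd). intros n Hn. apply Hin in Hn.
    destruct (Hp n (proj2 (Hin n) Hn)) as [Hpn [Hpnu Hrest]].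
    pose proof (interval_plus_ball_le Hu0 Hc (Hball n Hn) Hpn Hpnu).
    destruct (Hpos n Hn) as [Hxd _]. rewrite (lin_sub Hxd) in Hrest.
    pose proof (Hge n Hn). unfold c in *. lra. }
  unfold c in Hmain. unfold Rdiv.
  apply (Rmult_le_reg_r delta); [lra|].
  rewrite Rmult_assoc, Rinv_l by lra. lra.
Qed.
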